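(* Let $\alpha\ge1$. If all valuation functions are symmetric submodular and every item cost function $c_j$ is non-decreasing and $\alpha$-average-decreasing, then IACSM is $\alpha$-budget-balanced: its output $(A,p)$ satisfies $\sum_{j\in M}c_j(T_j)\le\sum_{i\in N}p_i\le\alpha\sum_{j\in M}c_j(T_j)$, where $T_j=\{i: j\in A_i\}$.
   Context: Players $N=\{1,\dots,n\}$, items $M=\{1,\dots,m\}$, non-decreasing valuations $v_i:2^M\to\mathbb{R}_{\ge0}$; symmetric: $f(S)=f(T)$ whenever $|S|=|T|$; submodular: $f(S\cup\{x\})-f(S)\ge f(T\cup\{x\})-f(T)$ for $S\subseteq T$, $x\notin T$. A cost function $c:2^N\to\mathbb{R}_{\ge0}$ is $\alpha$-average-decreasing if $\alpha\frac{c(S)}{|S|}\ge\frac{c(T)}{|T|}$ for all nonempty $S\subseteq T\subseteq N$. Mechanism IACSM (input: declared valuations $b$): maintain active set $X=N$, sets $T_j=N$ and cost shares $\chi_j=c_j(N)/n$ for all items $j$. While $X\neq\emptyset$: (1) every $i\in X$ computes $A_i\in\arg\max_{S\subseteq M}\{b_i(S)-\sum_{j\in S}\chi_j\}$, choosing among maximizers one of maximum cardinality $k$, and among those the $k$ items with smallest current $\chi_j$ (item ties by index); (2) choose $i^*\in X$ with $|A_{i^*}|$ minimum (ties by smallest index); (3) assign $A_{i^*}$ to $i^*$ permanently and remove $i^*$ from $X$; (4) for every item $j\notin A_{i^*}$ set $T_j:=T_j\setminus\{i^*\}$ and, if $T_j\ne\emptyset$, set $\chi_j:=\max\{\chi_j,c_j(T_j)/|T_j|\}$.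 Output the assigned bundles and payments $p_i=\sum_{j\in A_i}\chi_j$ with final cost shares. *)

From HB Require Import structures.
From mathcomp Require Import all_boot all_order all_algebra.
Set Implicit Arguments. Unset Strict Implicit. Unset Printing Implicit Defensive.
Import Order.TTheory GRing.Theory Num.Theory.
Local Open Scope ring_scope.

Section IACSM.
Variables (R : realFieldType) (n m : nat).
(* Players N = 'I_n, items M = 'I_m. *)
Variable b : 'I_n -> {set 'I_m} -> R.
Variable c : 'I_m -> {set 'I_n} -> R.

Record state := State {
  st_X : {set 'I_n};
  st_T : {ffun 'I_m -> {set 'I_n}};
  st_chi : {ffun 'I_m -> R};
  st_A : {ffun 'I_n -> {set 'I_m}} }.

Definition utility (chi : 'I_m -> R) (i : 'I_n) (S : {set 'I_m}) : R :=
  b i S - \sum_(j in S) chi j.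

Definition is_maximizer chi i (S : {set 'I_m}) : bool :=
  [forall S' : {set 'I_m}, utility chi i S' <= utility chi i S].

Definition max_card chi i : nat :=
  \max_(S : {set 'I_m} | is_maximizer chi i S) #|S|.

Definition item_before (chi : 'I_m -> R) (j' j : 'I_m) : bool :=
  (chi j' < chi j) || ((chi j' == chi j) && (j' < j)%N).

Definition k_cheapest chi (k : nat) : {set 'I_m} :=
  [set j | (#|[set j' | item_before chi j' j]| < k)%N].

(* demanded bundle A_i: among maximizers, one of maximum cardinality k,
   namely the k items with smallest chi_j.  (For symmetric valuations this
   set is always a maximizer; the fallback branch is only for totality.) *)
Definition demand chi i : {set 'I_m} :=
  let k := max_card chi i in
  if is_maximizer chi i (k_cheapest chi k) then k_cheapest chi k
  else odflt set0 [pick S | is_maximizer chi i S && (#|S| == k)].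

Definition chosen (X : {set 'I_n}) (D : 'I_n -> {set 'I_m}) : option 'I_n :=
  [pick i in X | [forall i' in X,
      (#|D i| < #|D i'|)%N || ((#|D i| == #|D i'|) && (i <= i')%N)]].

Definition step (s : state) : state :=
  let D := demand (st_chi s) in
  match chosen (st_X s) D with
  | None => s
  | Some istar =>
    let Ai := D istar in
    let T' := [ffun j => if j \in Ai then st_T s j else st_T s j :\ istar] in
    let chi' := [ffun j =>
       if (j \notin Ai) && (T' j != set0)
       then Num.max (st_chi s j) (c j (T' j) / #|T' j|%:R)
       else st_chi s j] in
    State (st_X s :\ istar) T' chi'
          [ffun i => if i == istar then Ai else st_A s i]
  end.

Definition init_state : state :=
  State [set: 'I_n] [ffun _ => [set: 'I_n]]
        [ffun j => c j [set: 'I_n] / n%:R] [ffun _ => set0].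

(* while X <> set0: each round removes one player, so n rounds suffice;
   step is the identity once X is empty. *)
Definition final_state : state := iter n step init_state.

Definition IACSM_alloc : 'I_n -> {set 'I_m} := st_A final_state.
Definition IACSM_pay (i : 'I_n) : R :=
  \sum_(j in st_A final_state i) st_chi final_state j.

End IACSM.

Definition symmetric_fun {T : finType} {R : realFieldType} (f : {set T} -> R) :=
  forall S U : {set T}, #|S| = #|U| -> f S = f U.
Definition submodular_fun {T : finType} {R : realFieldType} (f : {set T} -> R) :=
  forall (S U : {set T}) (x : T), S \subset U -> x \notin U ->
    f (x |: U) - f U <= f (x |: S) - f S.
Definition nondecreasing_fun {T : finType} {R : realFieldType} (f : {set T} -> R) :=
  forall S U : {set T}, S \subset U -> f S <= f U.
Definition nonneg_fun {T : finType} {R : realFieldType} (f : {set T} -> R) :=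
  forall S : {set T}, 0 <= f S.
Definition avg_decreasing {T : finType} {R : realFieldType} (alpha : R)
  (f : {set T} -> R) :=
  forall S U : {set T}, S != set0 -> S \subset U ->
    f U / #|U|%:R <= alpha * (f S / #|S|%:R).

From HB Require Import structures.
From mathcomp Require Import all_boot all_order all_algebra.
From mathcomp Require Import zify.
Set Implicit Arguments. Unset Strict Implicit. Unset Printing Implicit Defensive.
Import Order.TTheory GRing.Theory Num.Theory.
Local Open Scope ring_scope.

(* Throughout the run, T_j consists of the active players together with the
   players already holding j, and the cost share chi_j lies between the average
   cost c_j(T_j)/|T_j| and alpha times the average cost of every nonempty
   subset of T_j.  Removing a player from T_j keeps the upper bound because
   c_j is alpha-average-decreasing, and raising chi_j to the new average
   restores the lower bound.  When no player is active, T_j is exactly the set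
   of winners of j, so |T_j| chi_j lies between c_j(T_j) and alpha c_j(T_j),
   and summing over items gives the total payment.  The argument never looks at
   how the players' bundles are chosen. *)

Lemma sum_bundles_by_item (V : nmodType) (I J : finType) (A : I -> {set J})
    (f : J -> V) :
  \sum_i \sum_(j in A i) f j = \sum_j f j *+ #|[set i | j \in A i]|.
Proof.
rewrite (eq_bigr (fun i => \sum_j if j \in A i then f j else 0)); last first.
  by move=> i _; rewrite big_mkcond.
rewrite exchange_big; apply: eq_bigr => j _.
rewrite -big_mkcond sumr_const; congr (_ *+ _).
by apply: eq_card => i; rewrite !inE.
Qed.

Lemma scaled_share_bounds (R : realFieldType) (alpha cost share : R) (k : nat) :
  (0 < k)%N -> cost / k%:R <= share -> share <= alpha * (cost / k%:R) ->
  cost <= k%:R * share /\ k%:R * share <= alpha * cost.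
Proof.
move=> k_gt0 lb ub; have k_pos : 0 < k%:R :> R by rewrite ltr0n.
split; first by rewrite mulrC -ler_pdivrMr.
by rewrite mulrC -ler_pdivlMr // -mulrA.
Qed.

Lemma chosen_exists (n m : nat) (X : {set 'I_n}) (D : 'I_n -> {set 'I_m}) :
  X != set0 -> exists i, chosen X D = Some i.
Proof.
case/set0Pn => i0 Xi0; rewrite /chosen; case: pickP => [i _|none]; first by exists i.
(* The order used by [chosen] is lexicographic on (#|D i|, i), i.e. the order
   of the key #|D i| * n + i. *)
have [i Xi i_min] := @arg_minnP _ i0 (mem X) (fun i => #|D i| * n + i)%N Xi0.
have {}Xi : i \in X by [].
move: (none i); rewrite /= Xi /= => /negP[].
apply/forallP => i'; apply/implyP => Xi'.
have := i_min i' (Xi' : i' \in mem X); have := ltn_ord i; have := ltn_ord i'.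
move: #|D i| #|D i'| (nat_of_ord i) (nat_of_ord i') => a a' x x' ? ? ?.
case: (ltngtP a a') => //= [?|eq_aa']; first nia.
by subst a'; lia.
Qed.

Lemma chosen_mem (n m : nat) (X : {set 'I_n}) (D : 'I_n -> {set 'I_m}) i :
  chosen X D = Some i -> i \in X.
Proof. by rewrite /chosen; case: pickP => // i' /andP[Xi' _] [<-]. Qed.

Section Invariant.
Variables (R : realFieldType) (n m : nat) (alpha : R).
Variables (b : 'I_n -> {set 'I_m} -> R) (c : 'I_m -> {set 'I_n} -> R).
Hypothesis c_avg_decr : forall j, avg_decreasing alpha (c j).

Definition iacsm_inv (s : state R n m) :=
  [/\ forall j i, (i \in st_T s j) = (i \in st_X s) || (j \in st_A s i),
      forall j, st_T s j != set0 -> c j (st_T s j) / #|st_T s j|%:R <= st_chi s j &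
      forall j S, S != set0 -> S \subset st_T s j ->
        st_chi s j <= alpha * (c j S / #|S|%:R)].

Lemma iacsm_inv_init : iacsm_inv (init_state c).
Proof.
split=> [j i|j _|j S S_n0 _]; rewrite /= !ffunE ?in_setT ?cardsT ?card_ord //.
by have := @c_avg_decr j _ _ S_n0 (subsetT S); rewrite cardsT card_ord.
Qed.

Lemma iacsm_inv_step s : iacsm_inv s -> iacsm_inv (step b c s).
Proof.
case=> T_def chi_lb chi_ub; rewrite /step.
case Hch: chosen => [istar|] //.
have Xistar := chosen_mem Hch.
set Ai := demand _ _ _.
split=> [j i|j|j S S_n0] /=; rewrite !ffunE.
- rewrite in_setD1; case: (eqVneq i istar) => [->|i_ne] /=.
    by case: (boolP (j \in Ai)) => Aij; rewrite ?T_def ?Xistar ?in_setD1 ?eqxx.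
  by case: (j \in Ai); rewrite ?in_setD1 ?i_ne T_def.
- case: (boolP (j \in Ai)) => Aij /=; first exact: chi_lb.
  by move=> T_n0; rewrite T_n0 le_max lexx orbT.
- case: (boolP (j \in Ai)) => Aij /=; first exact: chi_ub.
  move=> S_sub; have T_n0 : st_T s j :\ istar != set0.
    by apply: contra S_n0 => /eqP T0; rewrite -subset0 -T0.
  rewrite T_n0 ge_max c_avg_decr // andbT.
  by apply: chi_ub => //; apply: subset_trans S_sub (subD1set _ _).
Qed.

Lemma card_active_step s : #|st_X (step b c s)| = #|st_X s|.-1.
Proof.
rewrite /step; case: (eqVneq (st_X s) set0) => [X0|Xn0].
  by case: chosen => [i|]; rewrite /= X0 ?set0D cards0.
have [i Hch] := chosen_exists (demand b (st_chi s)) Xn0.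
by rewrite Hch /= (cardsD1 i (st_X s)) (chosen_mem Hch).
Qed.

Lemma iacsm_inv_final : iacsm_inv (final_state b c) /\ st_X (final_state b c) = set0.
Proof.
suff: forall k, iacsm_inv (iter k (step b c) (init_state c)) /\
                #|st_X (iter k (step b c) (init_state c))| = (n - k)%N.
  by case/(_ n) => inv; rewrite subnn => /eqP; rewrite cards_eq0 => /eqP.
elim=> [|k [inv card_k]] /=.
  by rewrite cardsT card_ord subn0; split; first exact: iacsm_inv_init.
by rewrite card_active_step card_k; split; [exact: iacsm_inv_step | lia].
Qed.

Hypothesis c_set0 : forall j, c j set0 = 0.

Lemma final_item_budget j :
  let T := [set i | j \in IACSM_alloc b c i] in
  let x := #|T|%:R * st_chi (final_state b c) j in
  c j T <= x /\ x <= alpha * c j T.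
Proof.
move=> T x; rewrite {}/x {}/T.
have [[T_def chi_lb chi_ub] X0] := iacsm_inv_final.
have -> : [set i | j \in IACSM_alloc b c i] = st_T (final_state b c) j.
  by apply/setP => i; rewrite inE T_def X0 in_set0.
have [->|T_n0] := eqVneq (st_T (final_state b c) j) set0.
  by rewrite c_set0 cards0 mul0r mulr0.
apply: scaled_share_bounds (chi_lb _ T_n0) (chi_ub _ _ T_n0 (subxx _)).
by rewrite card_gt0.
Qed.

End Invariant.

Theorem mainTheorem8 (R : realFieldType) (n m : nat) (alpha : R)
  (b : 'I_n -> {set 'I_m} -> R) (c : 'I_m -> {set 'I_n} -> R) :
  1 <= alpha ->
  (forall i, nonneg_fun (b i)) ->
  (forall i, nondecreasing_fun (b i)) ->
  (forall i, symmetric_fun (b i)) ->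
  (forall i, submodular_fun (b i)) ->
  (forall j, nonneg_fun (c j)) ->
  (forall j, c j set0 = 0) ->
  (forall j, nondecreasing_fun (c j)) ->
  (forall j, avg_decreasing alpha (c j)) ->
  let A := IACSM_alloc b c in
  let p := IACSM_pay b c in
  let T := fun j : 'I_m => [set i | j \in A i] in
  \sum_(j < m) c j (T j) <= \sum_(i < n) p i /\
  \sum_(i < n) p i <= alpha * \sum_(j < m) c j (T j).
Proof.
move=> _ _ _ _ _ _ c_set0 _ c_avg_decr A p T.
have -> : \sum_i p i = \sum_j #|T j|%:R * st_chi (final_state b c) j.
  by rewrite sum_bundles_by_item; apply: eq_bigr => j _; rewrite mulr_natl.
rewrite mulr_sumr; split; apply: ler_sum => j _;
  by case: (final_item_budget b c_avg_decr c_set0 j).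
Qed.
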